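(* If $G \le \mathrm{Sym}(\mathbb{N})$ is a cofinitary group that is eventually bounded, then $G$ is not a maximal cofinitary group. In particular, no maximal cofinitary group is a $K_\sigma$ subset of $\mathbb{N}^{\mathbb{N}}$.
   Context: $\mathrm{Sym}(\mathbb{N})\subseteq\mathbb{N}^{\mathbb{N}}$ is the group of bijections of $\mathbb{N}$, with the topology inherited from Baire space. A subgroup is cofinitary if each non-identity element has finitely many fixed points, and maximal cofinitary if it is cofinitary and not properly contained in another cofinitary subgroup. For $f,g\in\mathbb{N}^{\mathbb{N}}$, $f<^* g$ means $f(n)<g(n)$ for all but finitely many $n$; a set $S\subseteq\mathbb{N}^{\mathbb{N}}$ is eventually bounded if there is $f\in\mathbb{N}^{\mathbb{N}}$ with $g<^*f$ for all $g\in S$. A set is $K_\sigma$ if it is contained in a countable union of compact sets. *)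

From Stdlib Require Import Arith List.

Definition baire := nat -> nat.

Definition bijective_nat (f : baire) : Prop :=
  exists g : baire, (forall n, g (f n) = n) /\ (forall n, f (g n) = n).

Definition is_subgroup_Sym (G : baire -> Prop) : Prop :=
  (forall f, G f -> bijective_nat f) /\
  G (fun n => n) /\
  (forall f g, G f -> G g -> G (fun n => f (g n))) /\
  (forall f, G f -> exists g, G g /\ (forall n, g (f n) = n) /\ (forall n, f (g n) = n)).

Definition finitely_many_fixed_points (f : baire) : Prop :=
  exists N, forall n, N <= n -> f n <> n.

Definition cofinitary (G : baire -> Prop) : Prop :=
  is_subgroup_Sym G /\
  (forall f, G f -> (exists n, f n <> n) -> finitely_many_fixed_points f).

Definition maximal_cofinitary (G : baire -> Prop) : Prop :=
  cofinitary G /\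
  (forall H : baire -> Prop, cofinitary H -> (forall f, G f -> H f) -> forall f, H f -> G f).

Definition eventually_lt (f g : baire) : Prop :=
  exists N, forall n, N <= n -> f n < g n.

Definition eventually_bounded (S : baire -> Prop) : Prop :=
  exists f : baire, forall g, S g -> eventually_lt g f.

Definition baire_open (U : baire -> Prop) : Prop :=
  forall f, U f -> exists n, forall g, (forall k, k < n -> g k = f k) -> U g.

Definition baire_compact (K : baire -> Prop) : Prop :=
  forall (I : Type) (U : I -> baire -> Prop),
    (forall i, baire_open (U i)) ->
    (forall f, K f -> exists i, U i f) ->
    exists l : list I, forall f, K f -> exists i, In i l /\ U i f.

Definition K_sigma (S : baire -> Prop) : Prop :=
  exists K : nat -> baire -> Prop,
    (forall m, baire_compact (K m)) /\ (forall f, S f -> exists m, K m f).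

(* Let G <= Sym(N) be cofinitary with every element eventually below f.  From f we
   build a fast strictly increasing map jump whose consecutive values are separated
   by spacing >= f.  Each point lies at a unique depth d on the jump-orbit of a
   unique root, and swap exchanges every point of even depth with its jump: a
   fixed-point-free involution that is not dominated by f, so swap is not in G.

   We show that the group generated by G and swap is still cofinitary.  Its
   elements are words in letters of G and swap; cancelling adjacent letters and
   conjugating (which preserves "identity or finitely many fixed points") reduces
   everything to the alternating words g1 swap g2 swap ... gn swap with every gi in
   G moving some point.  Beyond a threshold each gi moves points by less than the
   spacing, and an invariant on the depth parity and size of the iterates relative
   to the starting point (separated_step) shows that no large point is fixed.

   For the second claim, a compact subset of Baire space is coordinatewise bounded,
   so a K_sigma set is eventually bounded. *)

From Stdlib Require Import Arith List Lia Classical ClassicalEpsilon.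
Import ListNotations.

Definition tends_to_infinity (p : baire) : Prop :=
  forall M, exists N, forall x, N <= x -> M <= p x.

Fixpoint bound_below (q : baire) (M : nat) : nat :=
  match M with 0 => 0 | S M' => Nat.max (bound_below q M') (S (q M')) end.

Lemma bound_below_spec q M m : m < M -> q m < bound_below q M.
Proof.
  induction M as [|M IH]; intros Hm; simpl; [lia|].
  destruct (Nat.eq_dec m M) as [->|Hne]; [lia|].
  specialize (IH ltac:(lia)); lia.
Qed.

(* A map with a left inverse q is finite-to-one: p x < M forces x < bound_below q M. *)
Lemma left_invertible_tends_to_infinity p q :
  (forall x, q (p x) = x) -> tends_to_infinity p.
Proof.
  intros Hqp M. exists (bound_below q M). intros x Hx.
  destruct (le_lt_dec M (p x)) as [Hle|Hlt]; [exact Hle|].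
  pose proof (bound_below_spec q M (p x) Hlt) as Hb. rewrite Hqp in Hb. lia.
Qed.

Definition trivial_or_cofinitary (h : baire) : Prop :=
  finitely_many_fixed_points h \/ (forall x, h x = x).

Lemma trivial_or_cofinitary_ext h h' :
  (forall x, h x = h' x) -> trivial_or_cofinitary h' -> trivial_or_cofinitary h.
Proof.
  intros E [[N HN]|Hid].
  - left. exists N. intros n Hn. rewrite E. auto.
  - right. intros x. rewrite E. auto.
Qed.

(* The property is invariant under conjugation by a bijection c (with inverse c'):
   c maps the fixed points of h' onto those of h. *)
Lemma trivial_or_cofinitary_conj c c' h h' :
  (forall x, c' (c x) = x) -> (forall y, c (c' y) = y) ->
  (forall x, h (c x) = c (h' x)) ->
  trivial_or_cofinitary h' -> trivial_or_cofinitary h.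
Proof.
  intros Hc'c Hcc' Hconj [[N HN]|Hid].
  - left. destruct (left_invertible_tends_to_infinity c' c Hcc' N) as [N' HN'].
    exists N'. intros y Hy Hfix. apply (HN (c' y) (HN' y Hy)).
    rewrite <- (Hc'c (h' (c' y))), <- Hconj, Hcc', Hfix. reflexivity.
  - right. intros y. rewrite <- (Hcc' y), Hconj, Hid. reflexivity.
Qed.
Section Involution.
Variable f : baire.

Fixpoint spacing (x : nat) : nat :=
  match x with 0 => S (f 0) | S y => spacing y + S (f (S y)) end.

Lemma f_lt_spacing x : f x < spacing x.
Proof. destruct x; simpl; lia. Qed.

Lemma lt_spacing x : x < spacing x.
Proof. induction x; simpl; lia. Qed.

Lemma spacing_mono x y : x <= y -> spacing x <= spacing y.
Proof. induction 1; simpl; lia. Qed.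

(* A strictly increasing map whose consecutive values are separated by spacing:
   spacing (jump y) <= jump (S y). *)
Fixpoint jump (x : nat) : nat :=
  match x with 0 => spacing 0 | S y => spacing (jump y) + spacing (S y) end.

Lemma spacing_le_jump x : spacing x <= jump x.
Proof. destruct x; simpl; lia. Qed.

Lemma lt_jump x : x < jump x.
Proof. pose proof (lt_spacing x); pose proof (spacing_le_jump x); lia. Qed.

Lemma jump_spaced x y : x < y -> spacing (jump x) <= jump y.
Proof.
  induction 1 as [|y Hxy IH]; simpl; [lia|].
  pose proof (lt_spacing (jump y)). lia.
Qed.

Lemma jump_strict_mono x y : x < y -> jump x < jump y.
Proof. intros H. pose proof (jump_spaced x y H). pose proof (lt_spacing (jump x)). lia. Qed.

Lemma jump_mono x y : x <= y -> jump x <= jump y.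
Proof. intros H. destruct (Nat.eq_dec x y) as [->|Hne]; [lia|]. pose proof (jump_strict_mono x y ltac:(lia)); lia. Qed.

Lemma jump_le_inv x y : jump x <= jump y -> x <= y.
Proof. intros H. destruct (le_lt_dec x y) as [|Hlt]; [auto|]. pose proof (jump_strict_mono y x Hlt); lia. Qed.

Lemma jump_inj x y : jump x = jump y -> x = y.
Proof. intros H. apply Nat.le_antisymm; apply jump_le_inv; lia. Qed.

Definition orbit_root (r : nat) : Prop := forall y, jump y <> r.

Definition even_depth (x : nat) : Prop :=
  exists r d, orbit_root r /\ Nat.Even d /\ Nat.iter d jump r = x.

(* Since jump x > x, descending along preimages terminates at a root. *)
Lemma depth_exists x : exists r d, orbit_root r /\ Nat.iter d jump r = x.
Proof.
  induction x as [x IH] using (well_founded_induction lt_wf).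
  destruct (classic (exists y, jump y = x)) as [[y Hy]|Hroot].
  - destruct (IH y) as [r [d [Hr Hd]]]; [rewrite <- Hy; apply lt_jump|].
    exists r, (S d). split; [exact Hr|]. simpl. congruence.
  - exists x, 0. split; [|reflexivity]. intros y Hy. apply Hroot. eauto.
Qed.

(* Since jump is injective, the depth of a point is unique. *)
Lemma depth_unique d : forall d' r r', orbit_root r -> orbit_root r' ->
  Nat.iter d jump r = Nat.iter d' jump r' -> d = d'.
Proof.
  induction d as [|d IH]; intros [|d'] r r' Hr Hr' E; simpl in E.
  - reflexivity.
  - exfalso. exact (Hr _ (eq_sym E)).
  - exfalso. exact (Hr' _ E).
  - f_equal. exact (IH d' r r' Hr Hr' (jump_inj _ _ E)).
Qed.

Lemma even_depth_iff r d x :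
  orbit_root r -> Nat.iter d jump r = x -> (even_depth x <-> Nat.Even d).
Proof.
  intros Hr Hx. split.
  - intros [r' [d' [Hr' [He Hx']]]]. rewrite <- Hx in Hx'.
    rewrite (depth_unique d' d r' r Hr' Hr Hx') in He. exact He.
  - intros He. exists r, d. auto.
Qed.

Lemma even_depth_jump x : even_depth (jump x) <-> ~ even_depth x.
Proof.
  destruct (depth_exists x) as [r [d [Hr Hx]]].
  rewrite (even_depth_iff r d x Hr Hx).
  assert (Hx' : Nat.iter (S d) jump r = jump x) by (simpl; congruence).
  rewrite (even_depth_iff r (S d) _ Hr Hx'), Nat.Even_succ. split.
  - intros Ho He. exact (Nat.Even_Odd_False d He Ho).
  - intros Hn. destruct (Nat.Even_or_Odd d); tauto.
Qed.

Lemma odd_depth_in_range x : ~ even_depth x -> exists y, jump y = x.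
Proof.
  intros Hodd. destruct (depth_exists x) as [r [[|d] [Hr Hx]]].
  - exfalso. apply Hodd. exists r, 0. repeat split; auto. exists 0. reflexivity.
  - exists (Nat.iter d jump r). exact Hx.
Qed.

Lemma even_depth_beyond N : exists x, N <= x /\ even_depth x.
Proof.
  destruct (classic (even_depth N)) as [He|Ho]; [exists N; auto|].
  exists (jump N). pose proof (lt_jump N). split; [lia|]. apply even_depth_jump, Ho.
Qed.

Definition swap (x : nat) : nat :=
  if excluded_middle_informative (even_depth x) then jump x
  else epsilon (inhabits 0) (fun y => jump y = x).

Lemma swap_even x : even_depth x -> swap x = jump x.
Proof. unfold swap. destruct (excluded_middle_informative (even_depth x)); tauto. Qed.

Lemma jump_swap_odd x : ~ even_depth x -> jump (swap x) = x.
Proof.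
  intros Hodd. unfold swap. destruct (excluded_middle_informative (even_depth x)); [contradiction|].
  apply epsilon_spec, odd_depth_in_range, Hodd.
Qed.

Lemma swap_odd_even x : ~ even_depth x -> even_depth (swap x).
Proof.
  intros Hodd. apply NNPP. intros Hc.
  apply even_depth_jump in Hc. rewrite jump_swap_odd in Hc; auto.
Qed.

Lemma swap_even_odd x : even_depth x -> ~ even_depth (swap x).
Proof. intros He. rewrite swap_even by exact He. intros Hj. exact (proj1 (even_depth_jump x) Hj He). Qed.

Lemma swap_involutive x : swap (swap x) = x.
Proof.
  destruct (classic (even_depth x)) as [He|Hodd].
  - pose proof (swap_even_odd x He) as Hodd. rewrite (swap_even x He) in *.
    apply jump_inj, jump_swap_odd, Hodd.
  - rewrite (swap_even (swap x) (swap_odd_even x Hodd)). apply jump_swap_odd, Hodd.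
Qed.

Lemma swap_no_fixpoint x : swap x <> x.
Proof.
  pose proof (lt_jump x) as Hlt. destruct (classic (even_depth x)) as [He|Hodd].
  - rewrite swap_even by exact He. lia.
  - intros E. pose proof (jump_swap_odd x Hodd) as Ej. rewrite E in Ej. lia.
Qed.

Lemma swap_not_dominated : ~ eventually_lt swap f.
Proof.
  intros [N HN]. destruct (even_depth_beyond N) as [x [Hx He]].
  specialize (HN x Hx). rewrite swap_even in HN by exact He.
  pose proof (f_lt_spacing x). pose proof (spacing_le_jump x). lia.
Qed.

Definition separated (x0 z : nat) : Prop :=
  (even_depth x0 /\ even_depth z /\ z < x0) \/
  (~ even_depth z /\ (even_depth x0 \/ x0 < z)).

Definition weakly_separated (x0 z : nat) : Prop :=
  (even_depth x0 /\ even_depth z /\ z <= x0) \/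
  (~ even_depth z /\ (even_depth x0 \/ x0 <= z)).

Lemma separated_weakly x0 z : separated x0 z -> weakly_separated x0 z.
Proof. unfold separated, weakly_separated. intuition lia. Qed.

Lemma weakly_separated_refl x : weakly_separated x x.
Proof. unfold weakly_separated. destruct (classic (even_depth x)); [left|right]; auto. Qed.

Lemma separated_neq x0 z : separated x0 z -> z <> x0.
Proof. intros [[_ [_ H]]|[Hz [Hx|Hx]]]; [lia| |lia]. intros ->. contradiction. Qed.

Lemma separated_step x0 z y :
  y < spacing z -> y <> z -> z < spacing y ->
  weakly_separated x0 z -> separated x0 (swap y).
Proof.
  intros Hyz Hneq Hzy [[E0 [Ez Hle]] | [Oz Hpos]].
  - destruct (classic (even_depth y)) as [Ey|Oy].
    + right. split; [apply swap_even_odd, Ey|left; exact E0].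
    + left. split; [exact E0|]. split; [apply swap_odd_even, Oy|].
      destruct (le_lt_dec z (swap y)) as [Hl|Hl]; [exfalso|lia].
      pose proof (jump_mono _ _ Hl). pose proof (spacing_le_jump z).
      rewrite jump_swap_odd in * by exact Oy. lia.
  - pose proof (jump_swap_odd z Oz) as Jz.
    destruct (classic (even_depth y)) as [Ey|Oy].
    + right. split; [apply swap_even_odd, Ey|]. rewrite swap_even by exact Ey.
      destruct (le_lt_dec (jump y) z) as [Hl|Hl];
        [exfalso|destruct Hpos as [E0|Hx0]; [left; exact E0|right; lia]].
      rewrite <- Jz in Hl. apply jump_le_inv, spacing_mono in Hl.
      pose proof (spacing_le_jump (swap z)). lia.
    + exfalso. pose proof (jump_swap_odd y Oy) as Jy.
      destruct (lt_eq_lt_dec (swap y) (swap z)) as [[Hl|Hl]|Hl].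
      * apply jump_spaced in Hl. rewrite Jy, Jz in Hl. lia.
      * apply Hneq. rewrite <- Jy, <- Jz, Hl. reflexivity.
      * apply jump_spaced in Hl. rewrite Jy, Jz in Hl. lia.
Qed.

End Involution.

Section Extension.
Variable f : baire.
Variable G : baire -> Prop.
Hypothesis G_cofinitary : cofinitary G.
Hypothesis G_dominated : forall g, G g -> eventually_lt g f.

Lemma G_comp a b : G a -> G b -> G (fun n => a (b n)).
Proof. destruct G_cofinitary as [[_ [_ [H _]]] _]. exact (H a b). Qed.

Lemma G_inv a : G a -> exists b, G b /\ (forall n, b (a n) = n) /\ (forall n, a (b n) = n).
Proof. destruct G_cofinitary as [[_ [_ [_ H]]] _]. exact (H a). Qed.

Definition moved (g : baire) : Prop := exists x, g x <> x.

Lemma G_cofinitary_elt a : G a -> moved a -> finitely_many_fixed_points a.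
Proof. destruct G_cofinitary as [_ H]. exact (H a). Qed.

(* Words over the alphabet G ∪ {swap f}, acting from left to right. *)
Inductive letter : Type := Gen (g : baire) | Swap.

Definition act (t : letter) (x : nat) : nat :=
  match t with Gen g => g x | Swap => swap f x end.

Fixpoint eval (w : list letter) (x : nat) : nat :=
  match w with [] => x | t :: w' => eval w' (act t x) end.

Lemma eval_app w1 w2 x : eval (w1 ++ w2) x = eval w2 (eval w1 x).
Proof. revert x. induction w1; simpl; auto. Qed.

Definition admissible (t : letter) : Prop :=
  match t with Gen g => G g | Swap => True end.

Definition generated (h : baire) : Prop :=
  exists w, Forall admissible w /\ forall x, h x = eval w x.

Lemma act_inv t : admissible t -> exists t', admissible t' /\
  (forall x, act t' (act t x) = x) /\ (forall x, act t (act t' x) = x).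
Proof.
  destruct t as [g|]; simpl; intros Ht.
  - destruct (G_inv g Ht) as [g' [Hg' Hinv]]. exists (Gen g'). simpl. auto.
  - exists Swap. simpl. split; [exact I|split; intros; apply swap_involutive].
Qed.

(* The inverse of a word is the reversed word of inverse letters. *)
Lemma eval_inv w : Forall admissible w -> exists w', Forall admissible w' /\
  (forall x, eval w' (eval w x) = x) /\ (forall x, eval w (eval w' x) = x).
Proof.
  induction 1 as [|t w Ht Hw [w0 [Hw0 [A B]]]].
  - exists []. simpl. auto.
  - destruct (act_inv t Ht) as [t' [Ht' [C D]]].
    exists (w0 ++ [t']). split; [apply Forall_app; auto|].
    split; intros x; rewrite eval_app; simpl; [rewrite A, C|rewrite D, B]; reflexivity.
Qed.

Lemma generated_subgroup : is_subgroup_Sym generated.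
Proof.
  split; [|split; [|split]].
  - intros h [w [Hw E]]. destruct (eval_inv w Hw) as [w' [_ [A B]]].
    exists (eval w'). split; intros n; rewrite E; auto.
  - exists []. auto.
  - intros a b [wa [Ha Ea]] [wb [Hb Eb]]. exists (wb ++ wa).
    split; [apply Forall_app; auto|]. intros x. rewrite eval_app, Eb, Ea. reflexivity.
  - intros h [w [Hw E]]. destruct (eval_inv w Hw) as [w' [Hw' [A B]]].
    exists (eval w'). split; [exists w'; auto|]. split; intros n; rewrite E; auto.
Qed.

(* Moving the last letter of a word to the front is a conjugation. *)
Lemma rotate_last t m : admissible t ->
  trivial_or_cofinitary (eval (t :: m)) -> trivial_or_cofinitary (eval (m ++ [t])).
Proof.
  intros Ht. destruct (act_inv t Ht) as [t' [_ [A B]]].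
  apply (trivial_or_cofinitary_conj (act t) (act t')); auto.
  intros x. rewrite eval_app. reflexivity.
Qed.

Definition reduced_letter (t : letter) : Prop :=
  match t with Gen g => G g /\ moved g | Swap => True end.

Definition alternate (t1 t2 : letter) : Prop :=
  match t1, t2 with Gen _, Swap | Swap, Gen _ => True | _, _ => False end.

Fixpoint reduced (w : list letter) : Prop :=
  match w with
  | [] => True
  | t :: w' => reduced_letter t /\
      match w' with [] => True | t2 :: _ => alternate t t2 end /\ reduced w'
  end.

Definition shortenable (w : list letter) : Prop :=
  exists w', length w' < length w /\ Forall admissible w' /\ forall x, eval w' x = eval w x.

(* Cancel identity letters, merge adjacent G-letters, cancel adjacent swaps. *)
Lemma reduce w : Forall admissible w -> reduced w \/ shortenable w.
Proof.
  induction 1 as [|t w Ht Hw [Hr|[w' [Hlen [Hw' E]]]]]; [left; exact I| |].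
  - destruct t as [g|], w as [|[g2|] w2]; simpl in *; try (left; tauto).
    + destruct (classic (moved g)) as [Hm|Hm]; [left; tauto|right].
      exists []. split; [simpl; lia|]. split; [constructor|]. intros x. simpl.
      apply NNPP. intros Hx. apply Hm. exists x. auto.
    + right. inversion Hw; subst. exists (Gen (fun n => g2 (g n)) :: w2).
      split; [simpl; lia|]. split; [constructor; [apply G_comp|]; auto|]. reflexivity.
    + destruct (classic (moved g)) as [Hm|Hm]; [left; tauto|right].
      exists (Swap :: w2). split; [simpl; lia|]. split; [exact Hw|]. intros x. simpl.
      replace (g x) with x; [reflexivity|]. apply NNPP. intros Hx. apply Hm. exists x. auto.
    + right. exists w2. split; [simpl; lia|]. split; [inversion Hw; auto|].
      intros x. simpl. rewrite swap_involutive. reflexivity.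
  - right. exists (t :: w'). split; [simpl; lia|]. split; [constructor; auto|].
    intros x. apply E.
Qed.

Fixpoint blocks (gs : list baire) : list letter :=
  match gs with [] => [] | g :: gs' => Gen g :: Swap :: blocks gs' end.

Lemma blocks_snoc gs g : blocks (gs ++ [g]) = blocks gs ++ [Gen g; Swap].
Proof. induction gs as [|g' gs IH]; simpl; [reflexivity|]. rewrite IH. reflexivity. Qed.

Definition nontrivial_in_G (g : baire) : Prop := G g /\ moved g.

Lemma blocks_admissible gs : Forall nontrivial_in_G gs -> Forall admissible (blocks gs).
Proof. induction 1 as [|g gs [Gg _]]; simpl; repeat constructor; auto. Qed.

Lemma reduced_shape w : reduced w -> exists gs, Forall nontrivial_in_G gs /\
  (w = blocks gs \/
   (exists g, nontrivial_in_G g /\ w = blocks gs ++ [Gen g]) \/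
   w = Swap :: blocks gs \/
   (exists g, nontrivial_in_G g /\ w = Swap :: blocks gs ++ [Gen g])).
Proof.
  induction w as [|t w IH]; intros Hr; [exists []; auto|].
  destruct Hr as [Ht [Halt Hr]].
  destruct (IH Hr) as [gs [Hgs [->|[[g [Hg ->]]|[->|[g [Hg ->]]]]]]];
    destruct t as [g0|]; simpl in Ht.
  - destruct gs; simpl in Halt; [|contradiction].
    exists []. split; [constructor|]. right; left. exists g0. auto.
  - exists gs. auto.
  - destruct gs; simpl in Halt; contradiction.
  - exists gs. split; [exact Hgs|]. do 3 right. exists g. auto.
  - exists (g0 :: gs). split; [constructor; auto|]. left. reflexivity.
  - contradiction.
  - exists (g0 :: gs). split; [constructor; auto|]. right; left. exists g. auto.
  - contradiction.
Qed.

Definition tame (g : baire) (T : nat) : Prop :=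
  forall x, T <= x -> g x < spacing f x /\ g x <> x /\ (forall y, g y = x -> y < spacing f x).

Lemma tame_mono g T T' : T <= T' -> tame g T -> tame g T'.
Proof. intros H Hg x Hx. apply Hg. lia. Qed.

(* Since g and its inverse are dominated by f < spacing, and g is cofinitary. *)
Lemma tame_eventually g : nontrivial_in_G g -> exists T, tame g T.
Proof.
  intros [Gg Mg]. destruct (G_cofinitary_elt g Gg Mg) as [N2 HN2].
  destruct (G_dominated g Gg) as [N1 HN1].
  destruct (G_inv g Gg) as [g' [Gg' [Hg'g _]]].
  destruct (G_dominated g' Gg') as [N3 HN3].
  exists (N1 + N2 + N3). intros x Hx. pose proof (f_lt_spacing f x).
  split; [|split].
  - pose proof (HN1 x ltac:(lia)). lia.
  - apply HN2. lia.
  - intros y Hy. rewrite <- (Hg'g y), Hy. pose proof (HN3 x ltac:(lia)). lia.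
Qed.

Lemma tame_list gs : Forall nontrivial_in_G gs -> exists T, Forall (fun g => tame g T) gs.
Proof.
  induction 1 as [|g gs Hg _ [T HT]]; [exists 0; constructor|].
  destruct (tame_eventually g Hg) as [T' HT']. exists (T + T'). constructor.
  - apply (tame_mono g T'); [lia|exact HT'].
  - eapply Forall_impl; [|exact HT]. intros a Ha. apply (tame_mono a T); [lia|exact Ha].
Qed.

Fixpoint stays_beyond (T : nat) (gs : list baire) (z : nat) : Prop :=
  match gs with
  | [] => True
  | g :: gs' => T <= z /\ T <= g z /\ stays_beyond T gs' (swap f (g z))
  end.

(* Each step x |-> swap (g x) is finite-to-one, so large points stay large. *)
Lemma stays_beyond_eventually gs : Forall G gs ->
  forall T, exists N, forall x, N <= x -> stays_beyond T gs x.
Proof.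
  induction 1 as [|g gs Gg _ IH]; intros T; [exists 0; simpl; auto|].
  destruct (IH T) as [N1 HN1].
  destruct (G_inv g Gg) as [g' [_ [Hg'g _]]].
  assert (Hstep : tends_to_infinity (fun x => swap f (g x))).
  { apply (left_invertible_tends_to_infinity _ (fun y => g' (swap f y))).
    intros x. rewrite swap_involutive, Hg'g. reflexivity. }
  destruct (Hstep N1) as [N2 HN2].
  destruct (left_invertible_tends_to_infinity g g' Hg'g T) as [N3 HN3].
  exists (T + N2 + N3). intros x Hx. simpl. split; [lia|]. split; [apply HN3; lia|].
  apply HN1, HN2. lia.
Qed.

(* Iterating separated_step along a tame trajectory: the endpoint is separated from
   (in particular, different from) the start point. *)
Lemma trajectory_separated T x0 gs : forall z, gs <> [] ->
  Forall (fun g => tame g T) gs -> stays_beyond T gs z ->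
  weakly_separated f x0 z -> separated f x0 (eval (blocks gs) z).
Proof.
  induction gs as [|g gs IH]; intros z Hne Htame Hstay Hsep; [contradiction|].
  inversion Htame as [|? ? Hg Hgs]; subst. destruct Hstay as [Hz [Hgz Hstay]].
  destruct (Hg z Hz) as [Hmove [Hneq _]]. destruct (Hg (g z) Hgz) as [_ [_ Hback]].
  pose proof (separated_step f x0 z (g z) Hmove Hneq (Hback z eq_refl) Hsep) as Hnext.
  simpl. destruct gs as [|g' gs']; [exact Hnext|].
  apply IH; auto; [discriminate|]. apply separated_weakly, Hnext.
Qed.

Lemma blocks_cofinitary gs : gs <> [] -> Forall nontrivial_in_G gs ->
  finitely_many_fixed_points (eval (blocks gs)).
Proof.
  intros Hne Hgs. destruct (tame_list gs Hgs) as [T HT].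
  assert (HG : Forall G gs) by (eapply Forall_impl; [|exact Hgs]; intros a []; auto).
  destruct (stays_beyond_eventually gs HG T) as [N HN]. exists N. intros x Hx.
  apply (separated_neq f), (trajectory_separated T); auto. apply weakly_separated_refl.
Qed.

Lemma blocks_trivial_or_cofinitary gs : Forall nontrivial_in_G gs ->
  trivial_or_cofinitary (eval (blocks gs)).
Proof.
  intros Hgs. destruct gs as [|g gs]; [right; reflexivity|].
  left. apply blocks_cofinitary; [discriminate|exact Hgs].
Qed.

Definition shorter_words_ok (n : nat) : Prop :=
  forall w, length w < n -> Forall admissible w -> trivial_or_cofinitary (eval w).

(* blocks gs ++ [g]: rotating g to the front merges it with the first letter. *)
Lemma blocks_gen_ok gs g : Forall nontrivial_in_G gs -> nontrivial_in_G g ->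
  shorter_words_ok (length (blocks gs ++ [Gen g])) ->
  trivial_or_cofinitary (eval (blocks gs ++ [Gen g])).
Proof.
  intros Hgs [Gg Mg] IH. destruct gs as [|g1 gs].
  - left. exact (G_cofinitary_elt g Gg Mg).
  - inversion Hgs as [|? ? [Gg1 _] Hgs']; subst.
    apply rotate_last; [exact Gg|].
    apply (trivial_or_cofinitary_ext _ (eval (Gen (fun n => g1 (g n)) :: Swap :: blocks gs)));
      [reflexivity|].
    apply IH.
    + simpl. rewrite length_app. simpl. lia.
    + constructor; [apply G_comp; auto|constructor; [exact I|apply blocks_admissible, Hgs']].
Qed.

(* swap blocks gs: rotating the final swap to the front cancels it with the first. *)
Lemma swap_blocks_ok gs : Forall nontrivial_in_G gs ->
  shorter_words_ok (length (Swap :: blocks gs)) ->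
  trivial_or_cofinitary (eval (Swap :: blocks gs)).
Proof.
  induction gs as [|gl gs _] using rev_ind; intros Hgs IH.
  - left. exists 0. intros x _. apply swap_no_fixpoint.
  - apply Forall_app in Hgs as [Hgs Hgl]. inversion Hgl as [|? ? [Ggl _] _]; subst.
    rewrite blocks_snoc in *. change [Gen gl; Swap] with ([Gen gl] ++ [Swap]) in *.
    rewrite app_assoc, app_comm_cons.
    apply rotate_last; [exact I|].
    apply (trivial_or_cofinitary_ext _ (eval (blocks gs ++ [Gen gl]))).
    { intros x. simpl. rewrite swap_involutive. reflexivity. }
    apply IH.
    + simpl. rewrite !length_app. simpl. lia.
    + apply Forall_app. split; [apply blocks_admissible, Hgs|constructor; auto].
Qed.

(* swap blocks gs g: rotating g to the front yields blocks (g :: gs). *)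
Lemma swap_blocks_gen_ok gs g : Forall nontrivial_in_G gs -> nontrivial_in_G g ->
  trivial_or_cofinitary (eval (Swap :: blocks gs ++ [Gen g])).
Proof.
  intros Hgs Hg. rewrite app_comm_cons. apply rotate_last; [apply Hg|].
  apply (blocks_trivial_or_cofinitary (g :: gs)). constructor; auto.
Qed.

Lemma words_trivial_or_cofinitary w : Forall admissible w -> trivial_or_cofinitary (eval w).
Proof.
  remember (length w) as n eqn:Hn. revert w Hn.
  induction n as [n IH] using (well_founded_induction lt_wf). intros w Hn Hw.
  assert (Hshort : shorter_words_ok (length w)).
  { intros w' Hlen Hw'. apply (IH (length w')); auto. lia. }
  destruct (reduce w Hw) as [Hr|[w' [Hlen [Hw' E]]]].
  - destruct (reduced_shape w Hr) as [gs [Hgs [->|[[g [Hg ->]]|[->|[g [Hg ->]]]]]]].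
    + apply blocks_trivial_or_cofinitary, Hgs.
    + apply blocks_gen_ok; auto.
    + apply swap_blocks_ok; auto.
    + apply swap_blocks_gen_ok; auto.
  - apply (trivial_or_cofinitary_ext _ (eval w')); [intros x; auto|].
    apply Hshort; auto.
Qed.

Lemma generated_cofinitary : cofinitary generated.
Proof.
  split; [exact generated_subgroup|]. intros h [w [Hw E]] [x Hx].
  destruct (words_trivial_or_cofinitary w Hw) as [[N HN]|Hid].
  - exists N. intros n Hn. rewrite E. auto.
  - exfalso. apply Hx. rewrite E. auto.
Qed.

(* G ⊊ ⟨G, swap f⟩ is cofinitary: swap f is not dominated by f, so it is not in G. *)
Lemma bounded_not_maximal : ~ maximal_cofinitary G.
Proof.
  intros [_ Hmax].
  assert (Hswap : G (swap f)).
  { apply (Hmax generated generated_cofinitary).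
    - intros g Gg. exists [Gen g]. split; [constructor; simpl; auto|]. reflexivity.
    - exists [Swap]. split; [constructor; simpl; auto|]. reflexivity. }
  exact (swap_not_dominated f (G_dominated _ Hswap)).
Qed.

End Extension.

(* A compact subset of Baire space is bounded at each coordinate n: the open sets
   {g | g n = i} cover it, so finitely many values of g n occur. *)
Lemma compact_pointwise_bounded K n : baire_compact K -> exists b, forall g, K g -> g n <= b.
Proof.
  intros HK. destruct (HK nat (fun i g => g n = i)) as [l Hl].
  - intros i g Hg. exists (S n). intros g' Hg'. rewrite Hg' by lia. exact Hg.
  - intros g _. exists (g n). reflexivity.
  - exists (list_max l). intros g Kg. destruct (Hl g Kg) as [i [Hi <-]].
    assert (Hmax : list_max l <= list_max l) by lia.
    apply list_max_le in Hmax. rewrite Forall_forall in Hmax. exact (Hmax _ Hi).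
Qed.

(* Diagonalizing the coordinatewise bounds of countably many compact sets. *)
Lemma K_sigma_eventually_bounded X : K_sigma X -> eventually_bounded X.
Proof.
  intros [K [HK Hcov]].
  destruct (choice (fun mn b => forall g, K (fst mn) g -> g (snd mn) <= b)) as [bd Hbd].
  { intros [m n]. apply compact_pointwise_bounded, HK. }
  exists (fun n => bound_below (fun m => bd (m, n)) (S n)).
  intros g Xg. destruct (Hcov g Xg) as [m Km]. exists m. intros n Hn.
  pose proof (Hbd (m, n) g Km).
  pose proof (bound_below_spec (fun m => bd (m, n)) (S n) m ltac:(lia)). simpl in *. lia.
Qed.

Theorem mainTheorem18 :
  (forall G : baire -> Prop,
      cofinitary G -> eventually_bounded G -> ~ maximal_cofinitary G) /\
  (forall G : baire -> Prop, maximal_cofinitary G -> ~ K_sigma G).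
Proof.
  assert (Hbounded : forall G : baire -> Prop,
      cofinitary G -> eventually_bounded G -> ~ maximal_cofinitary G).
  { intros G HG [f Hf]. exact (bounded_not_maximal f G HG Hf). }
  split; [exact Hbounded|].
  intros G Hmax HK. exact (Hbounded G (proj1 Hmax) (K_sigma_eventually_bounded G HK) Hmax).
Qed.
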